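(* Under the standing assumptions, let $\vec v$ be a demand vector with at least four non-zero entries. Then there exists a task $t$ of type 2 with respect to $\vec v$ such that $\vec v$ has at least four non-empty tasks distinct from $t$. Moreover, for any such task $t$, letting $i$ be the intermediate task of $t$ with respect to $\vec v$ and letting $\vec v'$ be the demand vector such that $(\vec v,\vec v')$ is $(i,t)$-adjacent, the task $t$ is of type 2 with intermediate task $i$ with respect to $\vec v'$.
   Context: Standing assumptions: $n\ge 4$, $k\ge 5$, and $f_1,\dots,f_n$ are functions from demand vectors to $[k]$ satisfying the demand (for every demand vector $\vec v$ and task $j$, exactly $v_j$ agents $a$ have $f_a(\vec v)=j$), with maximum switching cost at most $2$. A demand vector is $\vec v=(v_1,\dots,v_k)$ of non-negative integers with $\sum v_j=n$; task $j$ is non-empty in $\vec v$ if $v_j\ge1$. The switching cost of $(\vec v,\vec v')$ is the number of agents $a$ with $f_a(\vec v)\ne f_a(\vec v')$; $\vec v,\vec v'$ are adjacent if $\|\vec v-\vec v'\|_1=2$. An ordered pair $(\vec v_1,\vec v_2)$ is $(s,t)$-adjacent if $s\ne t$ and $\vec v_2$ is obtained from $\vec v_1$ by moving one unit of demand from task $s$ to task $t$. Agent $a$ is $(i,j)$-mobile with respect to $(\vec v_1,\vec v_2)$ if $f_a(\vec v_1)=i$, $f_a(\vec v_2)=j$, $i\ne j$. If $(\vec v_1,\vec v_2)$ is $(s,t)$-adjacent with switching cost $2$, then there is a task $i\notin\{s,t\}$ such that one switching agent is $(s,i)$-mobile and the other is $(i,t)$-mobile; $i$ is called the intermediate task of $(\vec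 v_1,\vec v_2)$. A task $t$ is of type 1 with respect to $\vec v$ if for every task $s\ne t$ non-empty in $\vec v$, the $(s,t)$-adjacent pair starting at $\vec v$ has switching cost $1$. A task $t$ is of type 2 with respect to $\vec v$ if there exist a task $i$ and an agent $a$ such that for every task $s\notin\{i,t\}$ non-empty in $\vec v$, the $(s,t)$-adjacent pair starting at $\vec v$ has switching cost $2$, intermediate task $i$, and $(i,t)$-mobile agent $a$; then $i$ is the intermediate task of $t$ with respect to $\vec v$. *)

From mathcomp Require Import all_boot.
Set Implicit Arguments. Unset Strict Implicit. Unset Printing Implicit Defensive.

(* An assignment is f : 'I_n -> {ffun 'I_k -> nat} -> 'I_k
   (f a v = task of agent a under demand v); only its values on demand
   vectors matter. *)

Definition dvec (k : nat) := {ffun 'I_k -> nat}.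

Definition is_demand (n k : nat) (v : dvec k) : Prop := \sum_(j < k) v j = n.

Definition nonempty (k : nat) (v : dvec k) (j : 'I_k) : bool := 0 < v j.

Section Defs.
Variables (n k : nat).
Implicit Types (v : dvec k) (f : 'I_n -> dvec k -> 'I_k).

Definition satisfies_demand f : Prop :=
  forall v, is_demand n v -> forall j : 'I_k, #|[set a | f a v == j]| = v j.

Definition switching_cost f v v' : nat := #|[set a | f a v != f a v']|.

Definition l1dist v v' : nat := \sum_(j < k) ((v j - v' j) + (v' j - v j)).

Definition adjacent v v' : Prop := l1dist v v' = 2.

Definition max_switching_cost_le f (c : nat) : Prop :=
  forall v v', is_demand n v -> is_demand n v' -> adjacent v v' ->
    switching_cost f v v' <= c.

Definition move v (s t : 'I_k) : dvec k :=
  [ffun j => if j == s then (v j).-1 else if j == t then (v j).+1 else v j].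

Definition st_adjacent v1 v2 (s t : 'I_k) : Prop :=
  s != t /\ 0 < v1 s /\ v2 = move v1 s t.

Definition mobile f (a : 'I_n) v1 v2 (i j : 'I_k) : Prop :=
  f a v1 = i /\ f a v2 = j /\ i != j.

(* For an (s,t)-adjacent pair of switching cost 2: i is its intermediate
   task and a is its (i,t)-mobile agent. *)
Definition intermediate_with f v1 v2 (s t i : 'I_k) (a : 'I_n) : Prop :=
  switching_cost f v1 v2 = 2 /\ i != s /\ i != t /\
  (exists b : 'I_n, mobile f b v1 v2 s i) /\ mobile f a v1 v2 i t.

Definition type1 f v (t : 'I_k) : Prop :=
  forall s : 'I_k, s != t -> nonempty v s -> switching_cost f v (move v s t) = 1.

Definition type2_with f v (t i : 'I_k) : Prop :=
  exists a : 'I_n, forall s : 'I_k, s != i -> s != t -> nonempty v s ->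
    intermediate_with f v (move v s t) s t i a.

Definition type2 f v (t : 'I_k) : Prop := exists i : 'I_k, type2_with f v t i.

Definition num_nonempty_except v (t : 'I_k) : nat :=
  #|[set s | (s != t) && nonempty v s]|.

End Defs.

From mathcomp Require Import all_boot zify.
From Stdlib Require Import Classical.
Set Implicit Arguments. Unset Strict Implicit. Unset Printing Implicit Defensive.

(* Fix an assignment f satisfying the demand with maximum switching cost 2.
   Counting agents per task shows that every one-unit move s -> t from a
   demand vector X is realised either by a single agent moving s -> t (a
   simple move) or by two agents moving s -> j and j -> t (a move relayed
   through j); no three agents can ever switch between adjacent vectors.
   Comparing the adjacent vectors X[s -> t] and X[s' -> t] shows that one
   relayed move into t forces every move into t to be relayed through the
   same task with the same relay agent, so every target is of type 2 or is
   reached by simple moves only.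
   The core is a square argument on X[s1 -> T1][s2 -> T2]: if all sources
   of a set R with |R| >= 3 reach T1 by simple moves, then any other target
   T2 is of type 2 with intermediate task T1 (a type-1 T2 would give an
   impossible tournament on three sources).  Both halves of the theorem are
   instances of this: for existence take T1 an empty task or task 0, and for
   persistence observe that after the move i -> t every remaining source
   reaches i by a simple move. *)

Ltac decide_eqs :=
  repeat (rewrite ?eqxx /=; match goal with
          |- context [?a == ?b] => case: (a =P b) => [?|?]; try subst end);
  try lia; try congruence.

Lemma card_setD1_lb (T : finType) (A : {set T}) x : #|A| <= #|A :\ x| + 1.
Proof. by rewrite (cardsD1 x A); case: (x \in A) => /=; lia. Qed.

Section DemandMoves.
Variable k : nat.
Implicit Types (v : dvec k) (s t : 'I_k).

Lemma moveE v s t j : move v s t j =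
  if j == s then (v j).-1 else if j == t then (v j).+1 else v j.
Proof. by rewrite ffunE. Qed.

Lemma move_other v s t j : j <> s -> j <> t -> move v s t j = v j.
Proof. by move=> hjs hjt; rewrite moveE (introF eqP hjs) (introF eqP hjt). Qed.

Lemma move_demand n v s t : is_demand n v -> s <> t -> 0 < v s ->
  is_demand n (move v s t).
Proof.
rewrite /is_demand => hv hst hs; rewrite -hv.
have hts : (t == s) = false by apply/eqP => E; apply: hst.
rewrite (bigD1 s) //= (bigD1 t) //=; last by rewrite hts.
rewrite [in RHS](bigD1 s) //= [in RHS](bigD1 t) //=; last by rewrite hts.
rewrite !moveE eqxx hts eqxx (eq_bigr (fun j => v j)).
  by rewrite !addnA; congr (_ + _); lia.
by move=> j /andP[/eqP hjs /eqP hjt]; rewrite move_other.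
Qed.

Lemma move_adjacent v s t : s <> t -> 0 < v s -> adjacent v (move v s t).
Proof.
move=> hst hs; rewrite /adjacent /l1dist.
have hts : (t == s) = false by apply/eqP => E; apply: hst.
rewrite (bigD1 s) //= (bigD1 t) //=; last by rewrite hts.
rewrite !moveE eqxx hts eqxx big1; first by lia.
by move=> j /andP[/eqP hjs /eqP hjt]; rewrite move_other //; lia.
Qed.

Lemma move_redirect v s s' t : s <> s' -> s <> t -> s' <> t -> 0 < v s ->
  move (move v s t) s' s = move v s' t.
Proof. by move=> *; apply/ffunP => j; rewrite !ffunE; decide_eqs. Qed.

Lemma move_commute v a b c d : a <> b -> a <> c -> a <> d -> b <> c -> b <> d ->
  c <> d -> move (move v a b) c d = move (move v c d) a b.
Proof. by move=> *; apply/ffunP => j; rewrite !ffunE; decide_eqs. Qed.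

Lemma move_swap_targets v a b c d : a <> b -> a <> c -> a <> d -> b <> c ->
  b <> d -> c <> d -> move (move v a b) c d = move (move v a d) c b.
Proof. by move=> *; apply/ffunP => j; rewrite !ffunE; decide_eqs. Qed.

End DemandMoves.

Lemma relay_of_two_switches (T : eqType) (s t x y x' y' : T) :
  s <> t -> x <> y -> x' <> y' ->
  (forall j, (j == t) + (x == j) + (x' == j) = (j == s) + (y == j) + (y' == j)) ->
  (x = s /\ y = x' /\ y' = t) \/ (x' = s /\ y' = x /\ y = t).
Proof.
have relay_from_s x1 y1 x2 y2 : s <> t -> x1 <> y1 -> x2 <> y2 -> x1 = s ->
    (forall j, (j == t) + (x1 == j) + (x2 == j) = (j == s) + (y1 == j) + (y2 == j)) ->
    y1 = x2 /\ y2 = t.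
  by move=> hst h1 h2 -> H; move: (H y1) (H x2) (H t); decide_eqs.
move=> hst hxy hxy' H.
have := H s; rewrite eqxx; case: (s =P t) => // _.
case: (x =P s) => [hx|hx] /=; first by left; split => //; apply: relay_from_s H.
case: (x' =P s) => [hx'|hx'] /=; last by lia.
right; split => //; apply: (relay_from_s _ _ _ _ hst hxy' hxy hx') => j.
by rewrite -(addnAC _ (x == j)) H addnAC.
Qed.

Section Switching.
Variables (n k : nat) (f : 'I_n -> dvec k -> 'I_k).
Hypothesis demand_ok : satisfies_demand f.
Hypothesis cost_le2 : max_switching_cost_le f 2.
Implicit Types (X Y : dvec k) (s t i j : 'I_k).

Definition switchers X Y : {set 'I_n} := [set a | f a X != f a Y].

Inductive simple_move X Y s t (c : 'I_n) : Prop :=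
  SimpleMove of f c X = s & f c Y = t & (forall x, x <> c -> f x Y = f x X).

Inductive relayed_move X Y s t j (d g : 'I_n) : Prop :=
  RelayedMove of f d X = s & f d Y = j & f g X = j & f g Y = t & j <> s & j <> t &
    (forall x, x <> d -> x <> g -> f x Y = f x X).

(* Counting the agents assigned to j under X and Y, only switchers differ. *)
Lemma count_balance X Y j : is_demand n X -> is_demand n Y ->
  Y j + \sum_(a in switchers X Y) (f a X == j)
  = X j + \sum_(a in switchers X Y) (f a Y == j).
Proof.
move=> hX hY; rewrite -(demand_ok hX j) -(demand_ok hY j).
have card_as_sum V : #|[set a | f a V == j]| = \sum_a (f a V == j).
  by rewrite -sum1_card big_mkcond; apply: eq_bigr => a _; rewrite inE; case: eqP.
rewrite !card_as_sum (bigID (mem (switchers X Y))) /=.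
rewrite [in RHS](bigID (mem (switchers X Y))) /=.
have -> : \sum_(a | a \notin switchers X Y) (f a Y == j) =
          \sum_(a | a \notin switchers X Y) (f a X == j).
  by apply: eq_bigr => a; rewrite inE negbK => /eqP ->.
by rewrite [LHS]addnAC [RHS]addnAC; congr (_ + _); rewrite addnC.
Qed.

Definition net_transfer X Y s t := forall j,
  (j == t) + \sum_(a in switchers X Y) (f a X == j)
  = (j == s) + \sum_(a in switchers X Y) (f a Y == j).

Lemma move_net_transfer X s t : is_demand n X -> s <> t -> 0 < X s ->
  net_transfer X (move X s t) s t.
Proof.
move=> hX hst hs j; have := count_balance j hX (move_demand hX hst hs).
rewrite moveE; case: (j =P s) => [->|hjs]; first by rewrite (introF eqP hst); lia.
by case: (j =P t) => [->|hjt]; lia.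
Qed.

Lemma frame_of_switchers X Y (A : {set 'I_n}) x :
  switchers X Y \subset A -> x \notin A -> f x Y = f x X.
Proof.
move=> /subsetP hA hx; apply/eqP; rewrite eq_sym; apply: contraNT hx => hsw.
by apply: hA; rewrite inE.
Qed.

Lemma simple_of_one_switcher X Y s t c : s <> t -> net_transfer X Y s t ->
  switchers X Y = [set c] -> simple_move X Y s t c.
Proof.
move=> hst hbal hD.
have : c \in switchers X Y by rewrite hD set11.
rewrite inE => /eqP hc.
have hsum F : \sum_(a in switchers X Y) (F a : nat) = F c by rewrite hD big_set1.
have := hbal s; have := hbal t; rewrite !hsum !eqxx (introF eqP hst).
rewrite (introF eqP (nesym hst)) => bal_t bal_s.
split; [by move: bal_s bal_t; decide_eqs | by move: bal_s bal_t; decide_eqs |].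
move=> x hx; apply: (frame_of_switchers (A := [set c])); first by rewrite hD.
by rewrite in_set1; apply/eqP.
Qed.

Lemma relayed_of_two_switchers X Y s t d e : s <> t -> net_transfer X Y s t ->
  d != e -> switchers X Y = [set d; e] ->
  exists j d' g, relayed_move X Y s t j d' g.
Proof.
move=> hst hbal hde hD.
have : d \in switchers X Y by rewrite hD !inE eqxx.
have : e \in switchers X Y by rewrite hD !inE eqxx orbT.
rewrite !inE => /eqP he /eqP hd.
have hsum F : \sum_(a in switchers X Y) (F a : nat) = F d + F e.
  by rewrite hD big_setU1 ?big_set1 //= inE.
have frame x : x <> d -> x <> e -> f x Y = f x X.
  move=> hxd hxe; apply: (frame_of_switchers (A := [set d; e])); rewrite ?hD //.
  by rewrite !inE; apply/norP; split; apply/eqP.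
have bal j : (j == t) + (f d X == j) + (f e X == j)
           = (j == s) + (f d Y == j) + (f e Y == j).
  by have := hbal j; rewrite !hsum !addnA.
case: (relay_of_two_switches hst hd he bal) => [[? [? ?]]|[? [? ?]]].
- exists (f e X), d, e; split => //; congruence.
- exists (f d X), e, d; split => //; try congruence.
  by move=> x hxe hxd; apply: frame.
Qed.

Lemma cost_move_le2 X s t : is_demand n X -> s <> t -> 0 < X s ->
  switching_cost f X (move X s t) <= 2.
Proof.
by move=> hX hst hs; apply: cost_le2 => //; [exact: move_demand | exact: move_adjacent].
Qed.

Lemma move_shape X s t : is_demand n X -> s <> t -> 0 < X s ->
  (exists c, simple_move X (move X s t) s t c) \/
  (exists j d g, relayed_move X (move X s t) s t j d g).
Proof.
move=> hX hst hs.
have hbal := move_net_transfer hX hst hs.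
have : #|switchers X (move X s t)| <= 2 := cost_move_le2 hX hst hs.
rewrite leq_eqVlt ltnS leq_eqVlt ltnS leqn0; case/or3P.
- by case/cards2P => d [e [hde hD]]; right; apply: relayed_of_two_switchers hD.
- by case/cards1P => c hD; left; exists c; apply: simple_of_one_switcher.
- rewrite cards_eq0 => /eqP hD.
  by have := hbal s; rewrite hD !big_set0 eqxx (introF eqP hst).
Qed.

(* The two moves s -> t and s' -> t from the same vector are adjacent. *)
Lemma cost_two_moves_le2 X s s' t : is_demand n X -> s <> s' -> s <> t -> s' <> t ->
  0 < X s -> 0 < X s' -> switching_cost f (move X s t) (move X s' t) <= 2.
Proof.
move=> hX h1 h2 h3 hs hs'; rewrite -(move_redirect h1 h2 h3 hs).
apply: cost_move_le2; [exact: move_demand | exact: nesym h1 |].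
by rewrite move_other //; exact: nesym h1.
Qed.

Lemma no_three_switchers X Y a b c : switching_cost f X Y <= 2 ->
  a <> b -> a <> c -> b <> c ->
  f a X <> f a Y -> f b X <> f b Y -> f c X <> f c Y -> False.
Proof.
move=> hcost hab hac hbc ha hb hc.
have : #|a |: (b |: [set c])| <= switching_cost f X Y.
  apply: subset_leq_card; apply/subsetP => x; rewrite !inE.
  by case/or3P => /eqP ->; apply/eqP.
rewrite !cardsU1 cards1 !inE (introF eqP hab) (introF eqP hac) (introF eqP hbc).
by move/leq_trans/(_ hcost).
Qed.

(* Instantiate every frame hypothesis ("all other agents keep their task")
   at the agents a, b, c, and discharge the resulting side conditions
   "x <> c" by congruence as far as possible. *)
Ltac frames_at a b c :=
  repeat match goal with H : forall x : 'I_?m, _ |- _ =>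
    pose proof (H a); pose proof (H b); pose proof (H c); clear H end;
  repeat match goal with H : _ <> _ -> _ |- _ =>
    specialize (H ltac:(congruence)) end.

Ltac three_switchers hc a b c :=
  exfalso; frames_at a b c;
  apply: (no_three_switchers (a := a) (b := b) (c := c) hc); congruence.

Lemma assigned_nonempty X a j : is_demand n X -> f a X = j -> 0 < X j.
Proof.
move=> hX ha; rewrite -(demand_ok hX j); apply/card_gt0P.
by exists a; rewrite inE ha.
Qed.

Lemma relayed_move_cost X Y s t j d g :
  relayed_move X Y s t j d g -> switching_cost f X Y = 2.
Proof.
case=> hdX hdY hgX hgY hjs hjt frame.
have hdg : d != g by apply/eqP => E; apply: hjs; congruence.
rewrite /switching_cost (_ : [set a | f a X != f a Y] = [set d; g]).
  by rewrite cardsU1 cards1 inE hdg.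
apply/setP => x; rewrite !inE.
case: (x =P d) => [->|hxd]; first by rewrite hdX hdY; apply/eqP => E; apply: hjs.
case: (x =P g) => [->|hxg]; first by rewrite hgX hgY; apply/eqP.
by rewrite frame // eqxx.
Qed.

(* The paper's intermediate task of a cost-2 pair yields a relayed move:
   no third agent can switch. *)
Lemma relayed_of_intermediate X Y s t i a :
  intermediate_with f X Y s t i a -> exists d, relayed_move X Y s t i d a.
Proof.
move=> [hc [/eqP his [/eqP hit [[b [hb1 [hb2 /eqP hb3]]] [ha1 [ha2 /eqP ha3]]]]]].
exists b; split; try congruence.
move=> x hxb hxa; case: (f x Y =P f x X) => // hne.
have hc2 : switching_cost f X Y <= 2 by rewrite hc.
by three_switchers hc2 b a x.
Qed.

Definition relayed_into X t i (g : 'I_n) :=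
  forall s, s <> i -> s <> t -> 0 < X s -> exists d, relayed_move X (move X s t) s t i d g.

Lemma relayed_into_type2_with X t i g : relayed_into X t i g -> type2_with f X t i.
Proof.
move=> H; exists g => s /eqP hsi /eqP hst hs.
have [d hrel] := H s hsi hst hs.
have hcost := relayed_move_cost hrel.
case: hrel => hdX hdY hgX hgY hjs hjt _.
do 3 (split; first by [|apply/eqP]).
by split; [exists d | ]; do 2 (split => //); apply/eqP.
Qed.

Lemma simple_relayed_intermediate X s s' t c j d g : is_demand n X ->
  s <> s' -> s <> t -> s' <> t -> 0 < X s -> 0 < X s' ->
  simple_move X (move X s t) s t c -> relayed_move X (move X s' t) s' t j d g ->
  j = s.
Proof.
move=> hX h1 h2 h3 hs hs' hsimple hrel.
have hc := cost_two_moves_le2 hX h1 h2 h3 hs hs'.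
case: (j =P s) => // hjs; case: hsimple => *; case: hrel => *.
by three_switchers hc c d g.
Qed.

Lemma relayed_pair X s s' t j d g j' d' g' : is_demand n X ->
  s <> s' -> s <> t -> s' <> t -> 0 < X s -> 0 < X s' ->
  relayed_move X (move X s t) s t j d g -> relayed_move X (move X s' t) s' t j' d' g' ->
  (j = j' /\ g = g') \/ (j = s' /\ j' = s).
Proof.
move=> hX h1 h2 h3 hs hs' hrel hrel'.
have hc := cost_two_moves_le2 hX h1 h2 h3 hs hs'.
case: hrel => *; case: hrel' => *.
case: (j =P j') => hjj'.
  case: (g =P g') => hgg'; first by left.
  by subst j'; three_switchers hc d d' g.
case: (j =P s') => hjs'; case: (j' =P s) => hj's; first by right.
- case: (d' =P g) => hd'g; first by subst d'; three_switchers hc d g' g.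
  by three_switchers hc d g' d'.
- case: (d =P g') => hdg'; first by subst d; three_switchers hc d' g g'.
  by three_switchers hc d' g d.
- by three_switchers hc d d' g.
Qed.

Lemma relayed_into_of_relayed X t s0 j d g : is_demand n X -> s0 <> t -> 0 < X s0 ->
  relayed_move X (move X s0 t) s0 t j d g -> relayed_into X t j g.
Proof.
move=> hX hs0t hs0 hrel0 s hsj hst hs.
case: (s =P s0) => [->|hss0]; first by exists d.
case: (move_shape hX hst hs) => [[c hsimple] | [j' [d' [g' hrel]]]].
  by case: hsj; rewrite (simple_relayed_intermediate hX hss0 hst hs0t hs hs0 hsimple hrel0).
case: (relayed_pair hX (nesym hss0) hs0t hst hs0 hs hrel0 hrel) => [[-> ->]|[E _]].
  by exists d'.
by case: hsj.
Qed.

Lemma simple_of_not_type2 X t : is_demand n X -> ~ type2 f X t ->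
  forall s, s <> t -> 0 < X s -> exists c, simple_move X (move X s t) s t c.
Proof.
move=> hX hnt s hst hs; case: (move_shape hX hst hs) => // [[j [d [g hrel]]]].
case: hnt; exists j.
exact: relayed_into_type2_with (relayed_into_of_relayed hX hst hs hrel).
Qed.

Definition proper_source (w : dvec k) (T1 T2 r : 'I_k) :=
  [/\ r <> T1, r <> T2 & 0 < w r].

(* The corner Z = w[s1 -> T1][s2 -> T2] of a square of moves is adjacent to
   each of the four single moves, since the two moves commute and their
   targets can be exchanged. *)
Lemma square_costs w s1 s2 T1 T2 : is_demand n w -> s1 <> s2 -> T1 <> T2 ->
  proper_source w T1 T2 s1 -> proper_source w T1 T2 s2 ->
  [/\ switching_cost f (move w s1 T1) (move (move w s1 T1) s2 T2) <= 2,
      switching_cost f (move w s1 T2) (move (move w s1 T1) s2 T2) <= 2,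
      switching_cost f (move w s2 T1) (move (move w s1 T1) s2 T2) <= 2 &
      switching_cost f (move w s2 T2) (move (move w s1 T1) s2 T2) <= 2].
Proof.
move=> hw h12 hT [h11 h12' hs1] [h21 h22 hs2].
have E22 := move_commute w h11 h12 h12' (nesym h21) hT h22.
have E12 := move_swap_targets w h11 h12 h12' (nesym h21) hT h22.
have E21 := move_swap_targets w h22 (nesym h12) h21 (nesym h12') (nesym hT) h11.
split.
- apply: cost_move_le2; [exact: move_demand | exact: h22 |].
  by rewrite (move_other _ (nesym h12) h21).
- rewrite E12; apply: cost_move_le2; [exact: move_demand | exact: h21 |].
  by rewrite (move_other _ (nesym h12) h22).
- rewrite E22 E21; apply: cost_move_le2; [exact: move_demand | exact: h12' |].
  by rewrite (move_other _ h12 h11).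
- rewrite E22; apply: cost_move_le2; [exact: move_demand | exact: h11 |].
  by rewrite (move_other _ h12 h12').
Qed.

Lemma simple_square w s1 s2 T1 T2 x11 x12 x21 x22 : is_demand n w ->
  s1 <> s2 -> T1 <> T2 -> proper_source w T1 T2 s1 -> proper_source w T1 T2 s2 ->
  simple_move w (move w s1 T1) s1 T1 x11 -> simple_move w (move w s1 T2) s1 T2 x12 ->
  simple_move w (move w s2 T1) s2 T1 x21 -> simple_move w (move w s2 T2) s2 T2 x22 ->
  ((f x11 (move (move w s1 T1) s2 T2) = T1 /\ f x21 (move (move w s1 T1) s2 T2) = T2) \/
   (f x11 (move (move w s1 T1) s2 T2) = T2 /\ f x21 (move (move w s1 T1) s2 T2) = T1)) /\
  (forall x, x <> x11 -> x <> x21 -> f x (move (move w s1 T1) s2 T2) = f x w).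
Proof.
move=> hw h12 hT src1 src2 m11 m12 m21 m22.
have [_ c12 c21 c22] := square_costs hw h12 hT src1 src2.
case: src1 src2 => h11 h12' hs1 [h21 h22 hs2].
have hs2' : 0 < move w s1 T1 s2 by rewrite (move_other _ (nesym h12) h21).
case: m11 m12 m21 m22 => [? ? ?] [? ? ?] [? ? ?] [? ? ?].
case: (move_shape (move_demand hw h11 hs1) h22 hs2')
  => [[y [? ? ?]] | [j [d [g [? ? ? ? ? ? ?]]]]].
- case: (x21 =P y) => [?|?]; last by three_switchers c21 x11 y x21.
  subst y; case: (x22 =P x21) => [?|?]; last by three_switchers c22 x11 x21 x22.
  case: (x12 =P x11) => [?|?]; last by three_switchers c12 x21 x11 x12.
  subst; split; first by left; frames_at x11 x21 x21; split; congruence.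
  by move=> x ? ?; frames_at x x x; congruence.
- case: (j =P T1) => [?|?]; last first.
    case: (d =P x21) => [?|?]; last by three_switchers c21 x11 g d.
    by subst d; three_switchers c21 x11 g x21.
  subst j; case: (g =P x11) => [?|?]; last first.
    case: (d =P x21) => [?|?]; last by three_switchers c21 x11 g d.
    by subst d; case: (x22 =P x21) => [?|?]; [subst x22 |]; three_switchers c22 x11 x21 g.
  subst g; case: (x22 =P d) => [?|?]; last by three_switchers c22 x11 d x22.
  case: (x21 =P d) => [?|?]; last by three_switchers c21 x11 d x21.
  case: (x12 =P x11) => [?|?]; last by three_switchers c12 d x11 x12.
  split; first by right; frames_at x11 d d; split; congruence.
  by move=> x ? ?; frames_at x x x; congruence.
Qed.

(* Tournament relation on sources with simple moves into T1 and T2: p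
   prevails over q when, in the corner w[p -> T1][q -> T2], the agent xp
   realising the simple move p -> T1 is still at T1. *)
Definition prevails (w : dvec k) (T1 T2 p q : 'I_k) (xp : 'I_n) : bool :=
  f xp (move (move w p T1) q T2) == T1.

Lemma prevails_antisymmetric w T1 T2 p q xp1 xp2 xq1 xq2 : is_demand n w ->
  p <> q -> T1 <> T2 -> proper_source w T1 T2 p -> proper_source w T1 T2 q ->
  simple_move w (move w p T1) p T1 xp1 -> simple_move w (move w p T2) p T2 xp2 ->
  simple_move w (move w q T1) q T1 xq1 -> simple_move w (move w q T2) q T2 xq2 ->
  prevails w T1 T2 p q xp1 = ~~ prevails w T1 T2 q p xq1.
Proof.
move=> hw hpq hT sp sq mp1 mp2 mq1 mq2; rewrite /prevails.
case: (sp) (sq) => hp1 hp2 _ [hq1 hq2 _].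
rewrite -(move_swap_targets w hq2 (nesym hpq) hq1 (nesym hp2) (nesym hT) hp1).
rewrite -(move_commute w hp1 hpq hp2 (nesym hq1) hT hq2).
have [[[-> ->]|[-> ->]] _] := simple_square hw hpq hT sp sq mp1 mp2 mq1 mq2.
  by rewrite eqxx (introF eqP (nesym hT)).
by rewrite eqxx (introF eqP (nesym hT)).
Qed.

Lemma prevails_independent w T1 T2 p q r xp1 xp2 xq1 xq2 xr1 xr2 : is_demand n w ->
  p <> q -> p <> r -> q <> r -> T1 <> T2 ->
  proper_source w T1 T2 p -> proper_source w T1 T2 q -> proper_source w T1 T2 r ->
  simple_move w (move w p T1) p T1 xp1 -> simple_move w (move w p T2) p T2 xp2 ->
  simple_move w (move w q T1) q T1 xq1 -> simple_move w (move w q T2) q T2 xq2 ->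
  simple_move w (move w r T1) r T1 xr1 -> simple_move w (move w r T2) r T2 xr2 ->
  prevails w T1 T2 p q xp1 = prevails w T1 T2 p r xp1.
Proof.
move=> hw hpq hpr hqr hT srcp srcq srcr mp1 mp2 mq1 mq2 mr1 mr2.
have cq := simple_square hw hpq hT srcp srcq mp1 mp2 mq1 mq2.
have cr := simple_square hw hpr hT srcp srcr mp1 mp2 mr1 mr2.
case: srcp srcq srcr => hp1 hp2 hp [hq1 hq2 hq] [hr1 hr2 hr].
have hq' : 0 < move w p T1 q by rewrite (move_other _ (nesym hpq) hq1).
have hr' : 0 < move w p T1 r by rewrite (move_other _ (nesym hpr) hr1).
have hc := cost_two_moves_le2 (move_demand hw hp1 hp) hqr hq2 hr2 hq' hr'.
case: mp1 mq1 mr1 => [? ? ?] [? ? ?] [? ? ?]; rewrite /prevails.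
case: cq => [[[eq ?]|[eq ?]] ?]; case: cr => [[[er ?]|[er ?]] ?];
  rewrite eq er //; by three_switchers hc xp1 xq1 xr1.
Qed.

(* Two distinct targets cannot both be reached by simple moves from three
   common sources: the tournament on three sources would be both constant
   in the opponent and antisymmetric, an odd cycle of negations. *)
Lemma no_two_simple_targets w T1 T2 (R : {set 'I_k}) : is_demand n w ->
  T1 <> T2 -> 2 < #|R| -> (forall r, r \in R -> proper_source w T1 T2 r) ->
  (forall r, r \in R -> exists c, simple_move w (move w r T1) r T1 c) ->
  (forall r, r \in R -> exists c, simple_move w (move w r T2) r T2 c) -> False.
Proof.
move=> hw hT /card_gt2P [a [b [c [[ha hb hc] [/eqP hab /eqP hbc /eqP hca]]]]] hR H1 H2.
have [xa1 Ha1] := H1 a ha; have [xa2 Ha2] := H2 a ha.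
have [xb1 Hb1] := H1 b hb; have [xb2 Hb2] := H2 b hb.
have [xc1 Hc1] := H1 c hc; have [xc2 Hc2] := H2 c hc.
move: (hR a ha) (hR b hb) (hR c hc) => sa sb sc.
have := prevails_independent hw hab (nesym hca) hbc hT sa sb sc Ha1 Ha2 Hb1 Hb2 Hc1 Hc2.
have := prevails_independent hw (nesym hab) hbc (nesym hca) hT sb sa sc
  Hb1 Hb2 Ha1 Ha2 Hc1 Hc2.
have := prevails_independent hw hca (nesym hbc) hab hT sc sa sb Hc1 Hc2 Ha1 Ha2 Hb1 Hb2.
have := prevails_antisymmetric hw hab hT sa sb Ha1 Ha2 Hb1 Hb2.
have := prevails_antisymmetric hw (nesym hca) hT sa sc Ha1 Ha2 Hc1 Hc2.
have := prevails_antisymmetric hw hbc hT sb sc Hb1 Hb2 Hc1 Hc2.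
by do 6 case: (prevails _ _ _ _ _ _).
Qed.

Lemma simple_relayed_square w s1 s2 T1 T2 j x1 x2 d1 d2 g : is_demand n w ->
  s1 <> s2 -> T1 <> T2 -> j <> T1 ->
  proper_source w T1 T2 s1 -> proper_source w T1 T2 s2 ->
  simple_move w (move w s1 T1) s1 T1 x1 -> simple_move w (move w s2 T1) s2 T1 x2 ->
  relayed_move w (move w s1 T2) s1 T2 j d1 g ->
  relayed_move w (move w s2 T2) s2 T2 j d2 g -> False.
Proof.
move=> hw h12 hT hjT src1 src2 m1 m2 r1 r2.
have [_ c12 c21 c22] := square_costs hw h12 hT src1 src2.
case: src1 src2 => h11 h12' hs1 [h21 h22 hs2].
have hs2' : 0 < move w s1 T1 s2 by rewrite (move_other _ (nesym h12) h21).
case: m1 m2 r1 r2 => [? ? ?] [? ? ?] [? ? ? ? ? ? ?] [? ? ? ? ? ? ?].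
case: (move_shape (move_demand hw h11 hs1) h22 hs2')
  => [[y [? ? ?]] | [j' [d' [g' [? ? ? ? ? ? ?]]]]].
  by case: (x1 =P d1) => [?|?]; [subst d1 |]; three_switchers c12 x1 g y.
case: (g' =P x1) => [?|hg'].
  subst g'; case: (d' =P d2) => [?|?]; last by three_switchers c22 x1 g d'.
  by subst d'; three_switchers c22 x1 g d2.
case: (d' =P x2) => [?|?]; last by three_switchers c21 x1 g' d'.
subst d'; case: (j' =P T1) => [?|?]; last by three_switchers c21 x1 g' x2.
by subst j'; case: (x1 =P d1) => [?|?]; [subst d1 |]; three_switchers c12 x2 x1 g.
Qed.

(* If every source of R (|R| >= 3) reaches T1 by a simple move, then T2 is
   of type 2 with intermediate task T1: a type-1 T2 would contradict
   no_two_simple_targets, another intermediate task simple_relayed_square. *)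
Lemma simple_target_forces_relay w T1 T2 (R : {set 'I_k}) : is_demand n w ->
  T1 <> T2 -> 2 < #|R| -> (forall r, r \in R -> proper_source w T1 T2 r) ->
  (forall r, r \in R -> exists c, simple_move w (move w r T1) r T1 c) ->
  exists g, relayed_into w T2 T1 g.
Proof.
move=> hw hT hR hsrc hsimple.
have [[r0 [hr0 [j [d [g hrel]]]]]|no_relay] := classic
  (exists r, r \in R /\ exists j d g, relayed_move w (move w r T2) r T2 j d g).
- have [_ hr0T2 hr0pos] := hsrc r0 hr0.
  have hinto := relayed_into_of_relayed hw hr0T2 hr0pos hrel.
  case: (j =P T1) => [<-|hjT1]; first by exists g.
  have : 1 < #|R :\ j|.
    by rewrite -(leq_add2r 1); exact: leq_trans hR (card_setD1_lb R j).
  case/card_gt1P => r1 [r2 [/setD1P[/eqP hr1j hr1] /setD1P[/eqP hr2j hr2] /eqP hr12]].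
  have [x1 m1] := hsimple r1 hr1; have [x2 m2] := hsimple r2 hr2.
  have [_ hr1T2 hr1pos] := hsrc r1 hr1; have [_ hr2T2 hr2pos] := hsrc r2 hr2.
  have [d1 rel1] := hinto r1 hr1j hr1T2 hr1pos.
  have [d2 rel2] := hinto r2 hr2j hr2T2 hr2pos.
  by case: (simple_relayed_square hw hr12 hT hjT1 (hsrc r1 hr1) (hsrc r2 hr2)
    m1 m2 rel1 rel2).
- case: (no_two_simple_targets hw hT hR hsrc hsimple) => r hr.
  have [_ hrT2 hrpos] := hsrc r hr.
  case: (move_shape hw hrT2 hrpos) => // [[j [d [g hrel]]]].
  by case: no_relay; exists r; split => //; exists j, d, g.
Qed.

Lemma intermediate_move_simple X t i a s1 s2 b1 b2 : is_demand n X ->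
  s1 <> s2 -> s1 <> t -> s2 <> t ->  0 < X s1 -> 0 < X s2 ->
  relayed_move X (move X s1 t) s1 t i b1 a -> relayed_move X (move X s2 t) s2 t i b2 a ->
  simple_move X (move X i t) i t a.
Proof.
move=> hX h12 h1t h2t hs1 hs2 rel1 rel2.
have [_ _ hai _ hi1 hit _] := rel1; have [_ _ _ _ hi2 _ _] := rel2.
have hip : 0 < X i := assigned_nonempty hX hai.
have hc1 := cost_two_moves_le2 hX hi1 hit h1t hip hs1.
have hc2 := cost_two_moves_le2 hX hi2 hit h2t hip hs2.
case: (move_shape hX hit hip) => [[c mc] | [j [e [g relc]]]].
- case: (c =P a) => [<- //|hca].
  by case: mc rel1 => [? ? ?] [? ? ? ? ? ? ?]; three_switchers hc1 c a b1.
- case: relc rel1 rel2 => [? ? ? ? ? ? ?] [? ? ? ? ? ? ?] [? ? ? ? ? ? ?].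
  case: (e =P a) => [?|hea].
    subst e; case: (g =P b1) => [?|?]; last by three_switchers hc1 a b1 g.
    by subst g; three_switchers hc2 a b2 b1.
  case: (b1 =P g) => [?|?]; last by three_switchers hc1 a b1 e.
  by subst b1; three_switchers hc1 a g e.
Qed.

Lemma relay_source_simple X t i a s b : s <> i -> s <> t -> 0 < X i ->
  simple_move X (move X i t) i t a -> relayed_move X (move X s t) s t i b a ->
  simple_move (move X i t) (move (move X i t) s i) s i b.
Proof.
move=> hsi hst hip mi rel.
have [_ _ _ _ _ hit _] := rel.
rewrite (move_redirect (nesym hsi) hit hst hip).
case: mi rel => [? ? fr_i] [? ? ? ? ? ? fr_s].
have hba : b <> a by move=> E; apply: hsi; congruence.
split; [by rewrite fr_i | by [] |].
move=> x hxb; case: (x =P a) => [->|hxa]; first by congruence.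
by rewrite fr_s // fr_i.
Qed.

Lemma num_nonempty_exceptE X t :
  num_nonempty_except X t = #|[set j | nonempty X j] :\ t|.
Proof. by apply: eq_card => s; rewrite !inE. Qed.

Lemma type2_persists X t i : is_demand n X -> 4 <= num_nonempty_except X t ->
  type2_with f X t i -> type2_with f (move X i t) t i.
Proof.
move=> hX hnum [a Ha].
set R := [set j | nonempty X j] :\ t :\ i.
have hR : 2 < #|R|.
  rewrite -(leq_add2r 1); apply: leq_trans (card_setD1_lb _ i).
  by rewrite -num_nonempty_exceptE.
have relay s : s \in R ->
    [/\ s <> i, s <> t, 0 < X s & exists b, relayed_move X (move X s t) s t i b a].
  rewrite !inE => /and3P[/eqP hsi /eqP hst hs]; split => //.
  by apply: relayed_of_intermediate; apply: Ha => //; apply/eqP.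
case/card_gt2P: (hR) => s1 [s2 [_ [[h1 h2 _] [/eqP h12 _ _]]]].
have [_ hs1t hs1 [b1 rel1]] := relay s1 h1; have [_ hs2t hs2 [b2 rel2]] := relay s2 h2.
have mi := intermediate_move_simple hX h12 hs1t hs2t hs1 hs2 rel1 rel2.
have [_ _ hai _ _ hit _] := rel1.
have hip : 0 < X i := assigned_nonempty hX hai.
have [g hg] : exists g, relayed_into (move X i t) t i g.
  apply: (simple_target_forces_relay (move_demand hX hit hip) hit hR).
    by move=> r /relay[hri hrt hr _]; split => //; rewrite move_other.
  by move=> r /relay[hri hrt hr [b rel]]; exists b; apply: relay_source_simple rel.
exact: relayed_into_type2_with hg.
Qed.

(* First half of the theorem, when some task t0 is empty: t0 itself is of
   type 2, since otherwise any non-empty task would be of type 2 with the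
   empty intermediate task t0. *)
Lemma type2_exists_with_empty X t0 : is_demand n X -> X t0 = 0 ->
  4 <= #|[set j | nonempty X j]| -> type2 f X t0.
Proof.
move=> hX ht0 hN; apply: NNPP => hnt.
set N := [set j | nonempty X j].
have [t' ht'] : exists t', t' \in N.
  by apply/card_gt0P; exact: leq_trans (isT : 0 < 4) hN.
have pos r : r \in N -> 0 < X r by rewrite inE.
have neq0 r : r \in N -> r <> t0 by move=> /pos hr E; move: hr; rewrite E ht0.
have hR : 2 < #|N :\ t'|.
  by rewrite -(leq_add2r 1); apply: leq_trans hN (card_setD1_lb _ _).
have src r : r \in N :\ t' -> proper_source X t0 t' r.
  by case/setD1P => /eqP hrt' hr; split; [exact: neq0 | | exact: pos].
have simple r : r \in N :\ t' -> exists c, simple_move X (move X r t0) r t0 c.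
  by move=> /src[hrt0 _ hr]; apply: simple_of_not_type2.
have [g hg] := simple_target_forces_relay hX (nesym (neq0 _ ht')) hR src simple.
case/card_gt0P: (ltnW (ltnW hR)) => r /src[hrt0 hrt' hr].
have [d [_ _ hg0 _ _ _ _]] := hg r hrt0 hrt' hr.
by move: (assigned_nonempty hX hg0); rewrite ht0.
Qed.

(* First half of the theorem, when all tasks are non-empty: the task 0 is of
   type 2, or else the task 1 is, with intermediate task 0. *)
Lemma type2_exists_all_nonempty X : is_demand n X -> 5 <= k -> (forall j, 0 < X j) ->
  exists t, type2 f X t /\ 4 <= num_nonempty_except X t.
Proof.
move=> hX hk hpos.
have hN : [set j | nonempty X j] = [set: 'I_k].
  by apply/setP => j; rewrite !inE /nonempty hpos.
have num u : 4 <= num_nonempty_except X u.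
  rewrite num_nonempty_exceptE hN -(leq_add2r 1).
  by apply: leq_trans (card_setD1_lb _ u); rewrite cardsT card_ord.
pose t : 'I_k := Ordinal (leq_trans (isT : 0 < 5) hk).
pose t' : 'I_k := Ordinal (leq_trans (isT : 1 < 5) hk).
have [ht|hnt] := classic (type2 f X t); first by exists t.
exists t'; split => //.
have htt' : t <> t' by [].
have hR : 2 < #|[set: 'I_k] :\ t' :\ t|.
  rewrite -(leq_add2r 1); apply: leq_trans (card_setD1_lb _ t).
  rewrite -(leq_add2r 1); apply: leq_trans (card_setD1_lb _ t').
  by rewrite cardsT card_ord.
have src r : r \in [set: 'I_k] :\ t' :\ t -> proper_source X t t' r.
  by rewrite !inE => /andP[/eqP hrt /andP[/eqP hrt' _]]; split.
have simple r : r \in [set: 'I_k] :\ t' :\ t -> exists c, simple_move X (move X r t) r t c.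
  by move=> /src[hrt _ hr]; apply: simple_of_not_type2.
have [g hg] := simple_target_forces_relay hX htt' hR src simple.
by exists t; exact: relayed_into_type2_with hg.
Qed.

Lemma type2_exists X : is_demand n X -> 5 <= k -> 4 <= #|[set j | nonempty X j]| ->
  exists t, type2 f X t /\ 4 <= num_nonempty_except X t.
Proof.
move=> hX hk hN.
case: (boolP [exists j, X j == 0]) => [/existsP[t0 /eqP ht0]|/existsPn hpos].
  exists t0; split; first exact: type2_exists_with_empty.
  apply: leq_trans hN (subset_leq_card _); apply/subsetP => j; rewrite !inE => hj.
  by rewrite hj andbT; apply: contraTneq hj => ->; rewrite /nonempty ht0.
by apply: type2_exists_all_nonempty => // j; rewrite lt0n hpos.
Qed.

End Switching.

Theorem lemma4p8 (n k : nat) (f : 'I_n -> dvec k -> 'I_k) :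
  4 <= n -> 5 <= k ->
  satisfies_demand f -> max_switching_cost_le f 2 ->
  forall v : dvec k, is_demand n v ->
  4 <= #|[set j | nonempty v j]| ->
  (exists t : 'I_k, type2 f v t /\ 4 <= num_nonempty_except v t) /\
  (forall t i : 'I_k, 4 <= num_nonempty_except v t ->
     type2_with f v t i ->
     type2_with f (move v i t) t i).
Proof.
move=> _ hk hdem hcost v hv hN; split; first exact: type2_exists.
by move=> t i; apply: type2_persists.
Qed.
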